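(* In the D-RR setting under the strongly convex assumptions, fix an epoch $t$ and suppose $\alpha_t\le \frac{1}{2L}$. Then for every $\ell\in\{0,\dots,m-1\}$, $$\mathbb{E}\|\bar x_t^{\ell+1}-\bar x_*^{\ell+1}\|^2\le\Big(1-\frac{\alpha_t\mu}{2}\Big)\mathbb{E}\|\bar x_t^{\ell}-\bar x_*^{\ell}\|^2+2\alpha_t\sigma^2_{\mathrm{shuffle}}+\frac{2\alpha_tL^2}{n}\Big(\frac1\mu+\alpha_t\Big)\mathbb{E}\|\mathbf{x}_t^\ell-\mathbf{1}(\bar x_t^\ell)^\intercal\|^2 .$$
   Context: D-RR setting. Let $n,m,p\ge1$ be integers and $[k]=\{1,\dots,k\}$. For $i\in[n]$, $\ell\in[m]$ let $f_{i,\ell}:\mathbb{R}^p\to\mathbb{R}$ be differentiable; $f_i:=\frac1m\sum_{\ell=1}^m f_{i,\ell}$, $f:=\frac1n\sum_{i=1}^n f_i$. Let $W=(w_{ij})\in\mathbb{R}^{n\times n}$ be nonnegative, symmetric, with $W\mathbf 1=\mathbf 1$ ($\mathbf 1$ the all-ones vector), compliant with an undirected connected graph on $[n]$ (for $i\ne j$, $w_{ij}>0$ iff $\{i,j\}$ is an edge); $\rho_w$ denotes the spectral norm of $W-\frac1n\mathbf 1\mathbf 1^\intercal$ (so $\rho_w<1$). The D-RR algorithm: given deterministic initial points $x_{i,0}\in\mathbb{R}^p$ and stepsizes $\alpha_t>0$, at each epoch $t=0,1,2,\dots$ each agent $i$ draws a permutation $(\pi^i_0,\dots,\pi^i_{m-1})$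 of $[m]$ uniformly at random, independently across agents and epochs; sets $x^0_{i,t}=x_{i,t}$; for $\ell=0,\dots,m-1$ sets $x^{\ell+1}_{i,t}=\sum_{j=1}^n w_{ij}\big(x^\ell_{j,t}-\alpha_t\nabla f_{j,\pi^j_\ell}(x^\ell_{j,t})\big)$; and sets $x_{i,t+1}=x^m_{i,t}$. Notation: $\mathbf{x}_t^\ell\in\mathbb{R}^{n\times p}$ has $i$-th row $(x^\ell_{i,t})^\intercal$; $\bar x_t^\ell=\frac1n\sum_i x^\ell_{i,t}$; $\mathbf 1(\bar x_t^\ell)^\intercal$ is the $n\times p$ matrix all of whose rows equal $(\bar x_t^\ell)^\intercal$; $\|\cdot\|$ is the Euclidean norm for vectors and the Frobenius norm for matrices; $\mathbb{E}$ is expectation over all random permutations. Strongly convex assumptions: each $f_{i,\ell}$ is $\mu$-strongly convex and has $L$-Lipschitz gradient ($0<\mu\le L$); $x^*$ is the unique minimizer of $f$. For epoch $t$ (with the permutations of that epoch) define $\bar x_*^\ell:=x^*-\alpha_t\sum_{k=0}^{\ell-1}\frac1n\sum_{i=1}^n\nabla f_{i,\pi^i_k}(x^* )$ for $\ell=0,\dots,m$ (so $\bar x_*^0=\bar x_*^m=x^*$), $\bar s_\ell:=\frac1n\sum_{i=1}^n f_{i,\pi^i_\ell}$, and the shuffling variance $\sigma^2_{\mathrm{shuffle}}:=\max_{\ell=0,\dots,m-1}\mathbb{E}\big[\bar s_\ell(\bar x_*^\ell)-\bar s_\ell(x^* )-\langle\nabla\bar s_\ell(x^* ),\bar x_*^\ell-x^*\rangle\big]$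 (which depends on $\alpha_t$). *)

From HB Require Import structures.
From mathcomp Require Import all_boot all_order all_algebra all_fingroup.
From mathcomp Require Import all_classical all_reals all_analysis.
Set Implicit Arguments. Unset Strict Implicit. Unset Printing Implicit Defensive.
Import Order.TTheory GRing.Theory Num.Theory.
Import numFieldNormedType.Exports.
Local Open Scope ring_scope.

Section DRR.
Variables (R : realType) (n m p : nat).
Local Notation vec := 'rV[R]_p.

Definition dotv (u v : vec) : R := \sum_(k < p) u 0 k * v 0 k.
Definition enorm (v : vec) : R := Num.sqrt (dotv v v).
Definition fnorm (M : 'M[R]_(n, p)) : R :=
  Num.sqrt (\sum_(i < n) \sum_(k < p) M i k ^+ 2).

Definition xbar (X : 'M[R]_(n, p)) : vec := (n%:R)^-1 *: \sum_(i < n) row i X.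
Definition consensus_err (X : 'M[R]_(n, p)) : 'M[R]_(n, p) :=
  \matrix_(i, k) (X i k - xbar X 0 k).

Definition strongly_convex (mu : R) (f : vec -> R) : Prop :=
  forall (x y : vec) (lam : R), 0 <= lam <= 1 ->
    f (lam *: x + (1 - lam) *: y) <=
      lam * f x + (1 - lam) * f y - mu / 2 * lam * (1 - lam) * enorm (x - y) ^+ 2.

Definition is_gradient (f : vec -> R) (g : vec -> vec) : Prop :=
  forall x : vec, differentiable f x /\ forall v : vec, 'd f x v = dotv (g x) v.

Definition lipschitz_grad (L : R) (g : vec -> vec) : Prop :=
  forall x y : vec, enorm (g x - g y) <= L * enorm (x - y).

(* W compliant with an undirected connected graph on the agents *)
Definition comm_edge (W : 'M[R]_n) : rel 'I_n := fun i j => (i != j) && (0 < W i j).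
Definition mixing_matrix (W : 'M[R]_n) : Prop :=
  [/\ forall i j, 0 <= W i j,
      W^T = W,
      forall i, \sum_(j < n) W i j = 1
    & forall i j, connect (comm_edge W) i j].

(* permutation profile of one epoch: one permutation of the m samples per agent *)
Definition profile := {ffun 'I_n -> {perm 'I_m}}.

Variables (G : 'I_n -> 'I_m -> vec -> vec) (F : 'I_n -> 'I_m -> vec -> R)
          (W : 'M[R]_n).

Definition inner_step (a : R) (pi : profile) (l : 'I_m) (X : 'M[R]_(n, p)) :=
  W *m \matrix_(j, k) (X j k - a * G j (pi j l) (row j X) 0 k).

Definition inner_iter (a : R) (pi : profile) (X : 'M[R]_(n, p)) (l : nat) :=
  iteri l (fun k Y => oapp (fun o : 'I_m => inner_step a pi o Y) Y (insub k)) X.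

(* probability space for epochs 0..t : all permutation profiles, uniformly *)
Definition Omega (t : nat) := {ffun 'I_t.+1 -> profile}.
Definition Exp (t : nat) (Y : Omega t -> R) : R :=
  (#|{: Omega t}|%:R)^-1 * \sum_(w : Omega t) Y w.

(* x_s (start of epoch s), for s <= t, given all permutations w *)
Definition outer_iter (alpha : nat -> R) (X0 : 'M[R]_(n, p)) (t : nat)
    (w : Omega t) (s : nat) :=
  iteri s (fun k Y => oapp (fun o : 'I_t.+1 => inner_iter (alpha k) (w o) Y m) Y
                           (insub k)) X0.

Definition x_tl (alpha : nat -> R) (X0 : 'M[R]_(n, p)) (t : nat) (w : Omega t)
    (l : nat) := inner_iter (alpha t) (w ord_max) (outer_iter alpha X0 w t) l.

Definition xstar_bar (a : R) (xs : vec) (pi : profile) (l : nat) : vec :=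
  xs - a *: \sum_(k < m | (k < l)%N) ((n%:R)^-1 *: \sum_(i < n) G i (pi i k) xs).

Definition sbar (pi : profile) (l : 'I_m) (x : vec) : R :=
  (n%:R)^-1 * \sum_(i < n) F i (pi i l) x.
Definition grad_sbar (pi : profile) (l : 'I_m) (x : vec) : vec :=
  (n%:R)^-1 *: \sum_(i < n) G i (pi i l) x.

Definition shuffle_breg (a : R) (xs : vec) (pi : profile) (l : 'I_m) : R :=
  sbar pi l (xstar_bar a xs pi l) - sbar pi l xs
  - dotv (grad_sbar pi l xs) (xstar_bar a xs pi l - xs).

(* sigma^2_shuffle for epoch t (stepsize a = alpha_t), expectation over all
   permutations of epochs 0..t; the max over the nonempty index set of
   nonnegative quantities is taken with 0 as neutral element *)
Definition sigma2_shuffle (a : R) (xs : vec) (t : nat) : R :=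
  \big[Num.max/0]_(l < m) Exp (fun w : Omega t => shuffle_breg a xs (w ord_max) l).

End DRR.

From HB Require Import structures.
From mathcomp Require Import all_boot all_order all_algebra all_fingroup.
From mathcomp Require Import all_classical all_reals all_analysis.
From mathcomp Require Import ring lra.
Set Implicit Arguments. Unset Strict Implicit. Unset Printing Implicit Defensive.
Import Order.TTheory GRing.Theory Num.Theory.
Import numFieldNormedType.Exports.
Local Open Scope ring_scope.

(* Mixing by the doubly stochastic [W] preserves averages, so the averaged iterate makes
   an inexact gradient step: [xbar' - c' = e - a (u + v)] with [c = xstar_bar], [e = xbar - c],
   [u] the mean gradient error caused by disagreement between the agents and
   [v] the mean gradient difference between [xbar] and the minimizer [xs].  Expanding the
   square, the three-point identity splits [<e, v>] into Bregman divergences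
   [D(c, xbar) + D(xbar, xs) - D(c, xs)]: the first is at least [mu/2 |e|^2] by strong
   convexity, the second dominates [|v|^2 / 2L] by cocoercivity (and absorbs the
   [a^2 |v|^2] term since [a <= 1/2L]), the third averages to the shuffling variance.
   Young's inequality handles the cross terms with [u], and Lipschitz continuity bounds
   [|u|^2] by the consensus error. *)

Section InnerProduct.
Variables (R : realType) (p : nat).
Implicit Types (u v w : 'rV[R]_p) (a c : R).

Lemma dotvC u v : dotv u v = dotv v u.
Proof. by apply: eq_bigr => k _; rewrite mulrC. Qed.

Lemma dotvDl u v w : dotv (u + v) w = dotv u w + dotv v w.
Proof. by rewrite /dotv -big_split; apply: eq_bigr => k _; rewrite !mxE mulrDl. Qed.

Lemma dotvZl a u v : dotv (a *: u) v = a * dotv u v.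
Proof. by rewrite /dotv mulr_sumr; apply: eq_bigr => k _; rewrite !mxE mulrA. Qed.

Lemma dotvNl u v : dotv (- u) v = - dotv u v.
Proof. by rewrite -scaleN1r dotvZl mulN1r. Qed.

Lemma dotvBl u v w : dotv (u - v) w = dotv u w - dotv v w.
Proof. by rewrite dotvDl dotvNl. Qed.

Lemma dotvDr u v w : dotv w (u + v) = dotv w u + dotv w v.
Proof. by rewrite dotvC dotvDl !(dotvC w). Qed.

Lemma dotvZr a u v : dotv v (a *: u) = a * dotv v u.
Proof. by rewrite dotvC dotvZl dotvC. Qed.

Lemma dotvNr u v : dotv v (- u) = - dotv v u.
Proof. by rewrite dotvC dotvNl dotvC. Qed.

Lemma dotvBr u v w : dotv w (u - v) = dotv w u - dotv w v.
Proof. by rewrite dotvDr dotvNr. Qed.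

Lemma dotv_suml (I : finType) (P : pred I) (f : I -> 'rV[R]_p) v :
  dotv (\sum_(i | P i) f i) v = \sum_(i | P i) dotv (f i) v.
Proof.
rewrite /dotv exchange_big /=; apply: eq_bigr => k _.
by rewrite summxE mulr_suml.
Qed.

Lemma dotv0r v : dotv v 0 = 0.
Proof. by rewrite /dotv big1 // => k _; rewrite mxE mulr0. Qed.

Lemma dotv_ge0 v : 0 <= dotv v v.
Proof. by apply: sumr_ge0 => k _; rewrite -expr2 sqr_ge0. Qed.

Lemma enorm_sqr v : enorm v ^+ 2 = dotv v v.
Proof. by rewrite /enorm sqr_sqrtr // dotv_ge0. Qed.

Lemma dotv_self_subZD e u v a :
  dotv (e - a *: (u + v)) (e - a *: (u + v)) =
  dotv e e - 2 * a * dotv e u - 2 * a * dotv e v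
  + a ^+ 2 * (dotv u u + 2 * dotv u v + dotv v v).
Proof.
rewrite !(dotvBl, dotvBr, dotvDl, dotvDr, dotvZl, dotvZr).
by rewrite (dotvC u e) (dotvC v e) (dotvC v u); ring.
Qed.

Lemma dotv_young u v c : 0 < c -> 2 * dotv u v <= c * dotv u u + c^-1 * dotv v v.
Proof.
move=> c_gt0; have := dotv_ge0 (c *: u - v).
rewrite !(dotvBl, dotvBr, dotvZl, dotvZr) (dotvC v u) => sq_ge0.
have -> : c * dotv u u + c^-1 * dotv v v =
    c^-1 * (c * (c * dotv u u - dotv u v) - (c * dotv u v - dotv v v))
    + 2 * dotv u v by field; rewrite gt_eqF.
by rewrite lerDr mulr_ge0 // invr_ge0 ltW.
Qed.

(* A Cauchy-Schwarz bound, obtained from Young's inequality with weight [1/K]. *)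
Lemma dotv_le_of_dotv_self_le u v K : 0 < K -> dotv u u <= K ^+ 2 * dotv v v ->
  dotv u v <= K * dotv v v.
Proof.
move=> K_gt0 uK.
have Kinv_gt0 : 0 < K^-1 by rewrite invr_gt0.
have := dotv_young u v Kinv_gt0; rewrite invrK.
have : K^-1 * dotv u u <= K * dotv v v.
  by rewrite ler_pdivrMl // mulrA -expr2.
lra.
Qed.

Lemma dotv_mean_le n (w : 'I_n -> 'rV[R]_p) : (0 < n)%N ->
  dotv ((n%:R)^-1 *: \sum_i w i) ((n%:R)^-1 *: \sum_i w i)
  <= (n%:R)^-1 * \sum_i dotv (w i) (w i).
Proof.
move=> n_gt0; set wb := (n%:R)^-1 *: \sum_i w i.
have nR : 0 < n%:R :> R by rewrite ltr0n.
have sum_w : \sum_i w i = n%:R *: wb by rewrite /wb scalerA mulfV ?gt_eqF // scale1r.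
clearbody wb.
have variance : \sum_i dotv (w i - wb) (w i - wb) =
    \sum_i dotv (w i) (w i) - n%:R * dotv wb wb.
  under eq_bigr => i _ do rewrite !(dotvBl, dotvBr) (dotvC wb (w i)).
  rewrite !sumrB -!dotv_suml sum_w sumr_const card_ord -[wb *+ n]scaler_nat !dotvZl; ring.
have : 0 <= \sum_i dotv (w i - wb) (w i - wb).
  by apply: sumr_ge0 => i _; exact: dotv_ge0.
rewrite variance subr_ge0 => mean_le.
by rewrite -(ler_pM2l nR) mulrA mulfV ?gt_eqF // mul1r.
Qed.

End InnerProduct.

Section Bregman.
Variables (R : realType) (p : nat).
Local Notation vec := 'rV[R]_p.
Local Open Scope classical_set_scope.

Definition bregman (f : vec -> R) (g : vec -> vec) (y x : vec) : R :=
  f y - f x - dotv (g x) (y - x).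

Lemma bregman_three_point (f : vec -> R) (g : vec -> vec) c x z :
  dotv (g x - g z) (x - c) = bregman f g c x + bregman f g x z - bregman f g c z.
Proof. by rewrite /bregman !(dotvBl, dotvBr); ring. Qed.

Lemma lipschitz_grad_dotv (g : vec -> vec) L : lipschitz_grad L g ->
  forall x y, dotv (g x - g y) (g x - g y) <= L ^+ 2 * dotv (x - y) (x - y).
Proof.
move=> g_lip x y; rewrite -!enorm_sqr -exprMn.
have : 0 <= enorm (g x - g y) := sqrtr_ge0 _.
have := g_lip x y; nra.
Qed.

Variables (f : vec -> R) (g : vec -> vec) (mu : R).
Hypotheses (mu_ge0 : 0 <= mu) (f_grad : is_gradient f g)
  (f_sconvex : strongly_convex mu f).

(* Strong convexity along [x + h (y - x)] bounds the difference quotient of [f] at [x] by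
   [f y - f x - mu/2 |y - x|^2 + h mu/2 |y - x|^2]; let [h] tend to [0+]. *)
Lemma bregman_ge_strongly_convex x y :
  mu / 2 * dotv (y - x) (y - x) <= bregman f g y x.
Proof.
set d := y - x; have [f_diff df] := f_grad x.
set K := mu / 2 * dotv d d; set c := f y - f x - K.
suff : 'd f x d <= c by rewrite /bregman df /c; lra.
have K_ge0 : 0 <= K by rewrite mulr_ge0 ?divr_ge0 ?dotv_ge0.
have quotient_cvg : (fun h : R => h^-1 *: ((f \o shift x) (h *: d) - f x)) @ 0^'
    --> 'D_d f x by exact: diff_derivable.
rewrite -deriveE //; apply/ler_addgt0Pr => e e_gt0.
apply: (cvgr_to_le (cvg_dnbhs_at_right quotient_cvg)); near=> h.
have h_gt0 : 0 < h by near: h; exact: nbhs_right_gt.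
have h_lt1 : h < 1 by near: h; exact: nbhs_right_lt.
have hK_le : h * K <= e.
  have : h < e / (K + 1).
    by near: h; apply: nbhs_right_lt; rewrite divr_gt0 // ltr_wpDl.
  rewrite ltr_pdivlMr ?ltr_wpDl //; nra.
have h01 : 0 <= h <= 1 by rewrite !ltW.
have := f_sconvex y x h01.
have -> : h *: y + (1 - h) *: x = h *: d + x.
  by rewrite /d scalerBr scalerBl scale1r addrA addrAC.
rewrite enorm_sqr -/d /= /shift -ler_pdivlMl ?invr_gt0 // invrK /c -/K.
have : h * K = mu / 2 * h * dotv d d by rewrite /K; ring.
nra.
Unshelve. all: by end_near.
Qed.

Lemma bregman_ge0 x y : 0 <= bregman f g y x.
Proof.
apply: le_trans (bregman_ge_strongly_convex x y).
by rewrite mulr_ge0 ?divr_ge0 ?dotv_ge0.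
Qed.

Variable L : R.
Hypotheses (L_gt0 : 0 < L) (g_lip : lipschitz_grad L g).

Lemma bregman_grid_le x s k :
  bregman f g (x + k%:R *: s) x <= L * dotv s s * (k%:R * (k%:R + 1) / 2).
Proof.
elim: k => [|k IH].
  by rewrite /bregman scale0r addr0 !subrr dotv0r subrr !mul0r mulr0.
set z := x + k%:R *: s; set z' := x + k.+1%:R *: s.
have z'_sub : z' - z = s.
  by apply/rowP => i; rewrite /z' /z -natr1 !mxE; ring.
have z'_x : z' - x = k.+1%:R *: s by rewrite /z' addrC addKr.
have incr : f z' - f z <= dotv (g z') s.
  by have := bregman_ge0 z' z; rewrite /bregman -[z - z']opprB z'_sub dotvNr; lra.
have grad_diff : dotv (g z' - g x) s <= L * k.+1%:R * dotv s s.
  apply: dotv_le_of_dotv_self_le; first by rewrite mulr_gt0 // ltr0Sn.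
  have -> : (L * k.+1%:R) ^+ 2 * dotv s s = L ^+ 2 * dotv (k.+1%:R *: s) (k.+1%:R *: s).
    by rewrite dotvZl dotvZr; ring.
  by rewrite -z'_x lipschitz_grad_dotv.
have z_x : z - x = k%:R *: s by rewrite /z addrC addKr.
move: IH; rewrite /bregman -/z -/z' z'_x z_x !dotvZr.
rewrite dotvBl -natr1 in grad_diff *; nra.
Qed.

Lemma bregman_le_lipschitz x y : bregman f g y x <= L / 2 * dotv (y - x) (y - x).
Proof.
set d := y - x; set K := L / 2 * dotv d d.
have K_ge0 : 0 <= K by rewrite mulr_ge0 ?divr_ge0 ?dotv_ge0 ?ltW.
apply/ler_addgt0Pr => e e_gt0.
set N := (Num.bound (K / e)).+1.
have N_gt0 : 0 < N%:R :> R by rewrite ltr0Sn.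
have KN_le : K / N%:R <= e.
  rewrite ler_pdivrMr // mulrC -ler_pdivrMr //.
  have := archi_boundP (divr_ge0 K_ge0 (ltW e_gt0)).
  by move/ltW/le_trans; apply; rewrite ler_nat.
have := bregman_grid_le x (N%:R^-1 *: d) N.
rewrite scalerA mulfV ?gt_eqF // scale1r /d addrC subrK dotvZl dotvZr.
have -> : L * (N%:R^-1 * (N%:R^-1 * dotv d d)) * (N%:R * (N%:R + 1) / 2)
    = K + K / N%:R by rewrite /K; field; rewrite gt_eqF.
lra.
Qed.

(* Descent from [y] and convexity from [x], both evaluated at [y - (g y - g x) / L]. *)
Lemma bregman_ge_cocoercive x y :
  dotv (g y - g x) (g y - g x) <= 2 * L * bregman f g y x.
Proof.
set w := g y - g x.
have w_sq : dotv (g y) w - dotv (g x) w = dotv w w by rewrite -dotvBl.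
set z := y - L^-1 *: w.
have z_x : z - x = (y - x) - L^-1 *: w by rewrite /z addrAC.
have z_y : z - y = - (L^-1 *: w) by rewrite /z addrAC subrr add0r.
clearbody w z.
have := bregman_le_lipschitz y z; have := bregman_ge0 x z.
rewrite /bregman z_x z_y !(dotvBr, dotvNr, dotvNl, dotvZr, dotvZl) !opprK.
set D := f y - f x - _ => descent convex.
have half_le : L^-1 * dotv w w / 2 <= D.
  have : L / 2 * (L^-1 * (L^-1 * dotv w w)) = L^-1 * dotv w w / 2.
    by field; rewrite gt_eqF.
  have := congr1 (fun r => L^-1 * r) w_sq; rewrite /= mulrBr.
  rewrite /D; lra.
have := ler_wpM2l (ltW (mulr_gt0 (ltr0Sn R 1) L_gt0)) half_le.
by have -> : 2 * L * (L^-1 * dotv w w / 2) = dotv w w by field; rewrite gt_eqF.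
Qed.

End Bregman.

Section Averages.
Variables (R : realType) (n p : nat).
Local Notation vec := 'rV[R]_p.

Lemma mixing_matrix_col_sum (W : 'M[R]_n) :
  mixing_matrix W -> forall j, \sum_i W i j = 1.
Proof.
by case=> _ W_sym W_row _ j; rewrite -(W_row j); apply: eq_bigr => i _; rewrite -{1}W_sym mxE.
Qed.

Lemma xbar_mulmx (W : 'M[R]_n) (X : 'M[R]_(n, p)) :
  (forall j, \sum_i W i j = 1) -> xbar (W *m X) = xbar X.
Proof.
move=> W_col; rewrite /xbar; congr (_ *: _).
under eq_bigr => i _ do rewrite row_mul mulmx_sum_row.
rewrite exchange_big /=; apply: eq_bigr => j _.
by rewrite -scaler_suml (eq_bigr (fun i => W i j)) ?W_col ?scale1r // => i _; rewrite mxE.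
Qed.

Lemma xbar_sub_scale (a : R) (X : 'M[R]_(n, p)) (V : 'I_n -> vec) :
  xbar (\matrix_(j, k) (X j k - a * V j 0 k)) = xbar X - a *: ((n%:R)^-1 *: \sum_j V j).
Proof.
rewrite /xbar scalerA mulrC -scalerA -scalerBr; congr (_ *: _).
rewrite scaler_sumr -sumrB; apply: eq_bigr => i _.
by apply/rowP => k; rewrite !mxE.
Qed.

Lemma fnorm_consensus_err_sqr (X : 'M[R]_(n, p)) :
  fnorm (consensus_err X) ^+ 2 = \sum_i dotv (row i X - xbar X) (row i X - xbar X).
Proof.
rewrite /fnorm sqr_sqrtr; last by do 2!apply: sumr_ge0 => ? _; exact: sqr_ge0.
by apply: eq_bigr => i _; apply: eq_bigr => k _; rewrite !mxE expr2.
Qed.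

Lemma ler_mean (r s : 'I_n -> R) :
  (forall i, r i <= s i) -> (n%:R)^-1 * \sum_i r i <= (n%:R)^-1 * \sum_i s i.
Proof. by move=> rs; rewrite ler_wpM2l ?invr_ge0 ?ler0n // ler_sum. Qed.

Lemma mean_cst (K : R) : (0 < n)%N -> (n%:R)^-1 * \sum_(i < n) K = K.
Proof.
by move=> n_gt0; rewrite sumr_const card_ord -[K *+ n]mulr_natl mulKf // pnatr_eq0 -lt0n.
Qed.

End Averages.

Section InnerStep.
Variables (R : realType) (n m p : nat).
Variables (G : 'I_n -> 'I_m -> 'rV[R]_p -> 'rV[R]_p) (F : 'I_n -> 'I_m -> 'rV[R]_p -> R)
  (W : 'M[R]_n).
Implicit Types (a : R) (xs : 'rV[R]_p) (pi : profile n m) (l : 'I_m) (X : 'M[R]_(n, p)).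

Lemma inner_iterS a pi X l :
  inner_iter G W a pi X l.+1 = inner_step G W a pi l (inner_iter G W a pi X l).
Proof. by rewrite /inner_iter /= (valK l : insub (l : nat) = Some l). Qed.

Lemma xstar_barS a xs pi l :
  xstar_bar G a xs pi l.+1 = xstar_bar G a xs pi l - a *: grad_sbar G pi l xs.
Proof.
rewrite /xstar_bar /grad_sbar (bigD1 l) ?ltnS //= scalerDr opprD addrA addrAC.
congr (_ - _ *: _ - _); apply: eq_bigl => k.
by rewrite ltnS leq_eqVlt -val_eqE; case: ltngtP.
Qed.

Lemma inner_step_avg_error a xs pi l X : mixing_matrix W ->
  xbar (inner_step G W a pi l X) - xstar_bar G a xs pi l.+1 =
  (xbar X - xstar_bar G a xs pi l)
  - a *: ((n%:R)^-1 *: \sum_i (G i (pi i l) (row i X) - G i (pi i l) (xbar X))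
          + (n%:R)^-1 *: \sum_i (G i (pi i l) (xbar X) - G i (pi i l) xs)).
Proof.
move=> W_mix; pose g i := G i (pi i l).
rewrite xbar_mulmx; last exact: mixing_matrix_col_sum.
rewrite [xbar _](xbar_sub_scale a X (fun j => g j (row j X))).
rewrite xstar_barS /grad_sbar -scalerDr.
have -> : \sum_i (g i (row i X) - g i (xbar X)) + \sum_i (g i (xbar X) - g i xs)
    = \sum_i g i (row i X) - \sum_i g i xs by rewrite !sumrB addrA subrK.
by rewrite /g; apply/rowP => k; rewrite !mxE; ring.
Qed.

Lemma shuffle_breg_mean a xs pi l :
  shuffle_breg G F a xs pi l =
  (n%:R)^-1 * \sum_i bregman (F i (pi i l)) (G i (pi i l)) (xstar_bar G a xs pi l) xs.
Proof.
rewrite /shuffle_breg /sbar /grad_sbar dotvZl dotv_suml -!mulrBr -!sumrB.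
by congr (_ * _); apply: eq_bigr.
Qed.

End InnerStep.

Section OneStep.
Variables (R : realType) (n m p : nat).
Variables (G : 'I_n -> 'I_m -> 'rV[R]_p -> 'rV[R]_p) (F : 'I_n -> 'I_m -> 'rV[R]_p -> R)
  (W : 'M[R]_n) (mu L : R).
Hypotheses (n_gt0 : (0 < n)%N) (W_mix : mixing_matrix W)
  (FG_grad : forall i l, is_gradient (F i l) (G i l))
  (mu_gt0 : 0 < mu) (mu_le_L : mu <= L)
  (F_sconvex : forall i l, strongly_convex mu (F i l))
  (G_lip : forall i l, lipschitz_grad L (G i l)).

Section Selection.
Variable s : 'I_n -> 'I_m.
Local Notation D i := (bregman (F i (s i)) (G i (s i))).

Lemma mean_bregman_ge_strongly_convex y x :
  mu / 2 * dotv (y - x) (y - x) <= (n%:R)^-1 * \sum_i D i y x.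
Proof.
rewrite -(mean_cst (mu / 2 * dotv (y - x) (y - x)) n_gt0); apply: ler_mean => i.
exact: (bregman_ge_strongly_convex (ltW mu_gt0) (FG_grad i (s i)) (F_sconvex i (s i))).
Qed.

Lemma mean_bregman_ge0 y x : 0 <= (n%:R)^-1 * \sum_i D i y x.
Proof.
rewrite mulr_ge0 ?invr_ge0 ?ler0n //; apply: sumr_ge0 => i _.
exact: (bregman_ge0 (ltW mu_gt0) (FG_grad i (s i)) (F_sconvex i (s i))).
Qed.

Lemma mean_grad_diff_sqr_le y x :
  let v := (n%:R)^-1 *: \sum_i (G i (s i) y - G i (s i) x) in
  dotv v v <= 2 * L * ((n%:R)^-1 * \sum_i D i y x).
Proof.
have L_gt0 : 0 < L by apply: lt_le_trans mu_le_L.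
apply: le_trans (dotv_mean_le _ n_gt0) _; rewrite mulrCA [2 * L * _]mulr_sumr.
apply: ler_mean => i; exact: (bregman_ge_cocoercive (ltW mu_gt0) (FG_grad i (s i))
  (F_sconvex i (s i)) L_gt0 (G_lip i (s i))).
Qed.

Lemma mean_grad_disagreement_sqr_le (X : 'M[R]_(n, p)) :
  let u := (n%:R)^-1 *: \sum_i (G i (s i) (row i X) - G i (s i) (xbar X)) in
  dotv u u <= L ^+ 2 / n%:R * fnorm (consensus_err X) ^+ 2.
Proof.
apply: le_trans (dotv_mean_le _ n_gt0) _; rewrite fnorm_consensus_err_sqr.
rewrite mulrAC [X in _ <= X]mulrC [L ^+ 2 * _]mulr_sumr; apply: ler_mean => i.
exact: (lipschitz_grad_dotv (G_lip i (s i))).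
Qed.

End Selection.

Lemma avg_error_step_le a xs (pi : profile n m) (l : 'I_m) (X : 'M[R]_(n, p)) :
  0 < a -> a <= (2 * L)^-1 ->
  enorm (xbar (inner_step G W a pi l X) - xstar_bar G a xs pi l.+1) ^+ 2 <=
  (1 - a * mu / 2) * enorm (xbar X - xstar_bar G a xs pi l) ^+ 2
  + 2 * a * shuffle_breg G F a xs pi l
  + 2 * a * L ^+ 2 / n%:R * (mu^-1 + a) * fnorm (consensus_err X) ^+ 2.
Proof.
move=> a_gt0 a_le.
have aL_le : 2 * a * L <= 1.
  have L_gt0 : 0 < L by apply: lt_le_trans mu_le_L.
  by move: a_le; rewrite -[(2 * L)^-1]div1r ler_pdivlMr ?mulr_gt0 //; nra.
set xb := xbar X; set c := xstar_bar G a xs pi l; set e := xb - c.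
have e_sq_le := mean_bregman_ge_strongly_convex (fun i => pi i l) c xb.
have S2_ge0 := mean_bregman_ge0 (fun i => pi i l) xb xs.
have v_sq_le := mean_grad_diff_sqr_le (fun i => pi i l) xb xs.
have u_sq_le := mean_grad_disagreement_sqr_le (fun i => pi i l) X.
rewrite inner_step_avg_error // shuffle_breg_mean // -/xb -/c -/e !enorm_sqr.
rewrite -/xb in u_sq_le *; rewrite -[c - xb]opprB dotvNl dotvNr opprK -/e in e_sq_le.
set S1 := _ * \sum_i _ c xb in e_sq_le; set S2 := _ * \sum_i _ xb xs in S2_ge0 v_sq_le.
set Dsh := _ * \sum_i _ c xs.
set u := _ *: \sum_i _ in u_sq_le *; set v := _ *: \sum_i _ in v_sq_le *.
set C := fnorm _ ^+ 2 in u_sq_le *.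
have e_v : dotv e v = S1 + S2 - Dsh.
  rewrite dotvC dotvZl dotv_suml /S1 /S2 /Dsh -!mulrDr -mulrBr -big_split -sumrB /=.
  by congr (_ * _); apply: eq_bigr => i _; rewrite (bregman_three_point (F i (pi i l))).
have young_eu := dotv_young (- e) u (divr_gt0 mu_gt0 (ltr0Sn R 1)).
rewrite !(dotvNl, dotvNr) opprK invf_div in young_eu.
have young_uv := dotv_young u v ltr01; rewrite invr1 !mul1r in young_uv.
rewrite dotv_self_subZD e_v.
have := dotv_ge0 u; have := dotv_ge0 v; have := ltW mu_gt0.
have a_young_eu := ler_wpM2l (ltW a_gt0) young_eu.
have a2_young_uv := ler_wpM2l (sqr_ge0 a) young_uv.
have a_e_sq_le := ler_wpM2l (ltW a_gt0) e_sq_le.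
have a2_v_sq_le := ler_wpM2l (sqr_ge0 a) v_sq_le.
have a_S2_le := ler_piMr (mulr_ge0 (ltW a_gt0) S2_ge0) aL_le.
have coef_ge0 : 0 <= 2 * a / mu + 2 * a ^+ 2.
  by rewrite addr_ge0 ?mulr_ge0 ?invr_ge0 ?sqr_ge0 ?ltW.
have cons_le := ler_wpM2l coef_ge0 u_sq_le.
have -> : 2 * a * L ^+ 2 / n%:R * (mu^-1 + a) * C =
    (2 * a / mu + 2 * a ^+ 2) * (L ^+ 2 / n%:R * C) by ring.
lra.
Qed.
End OneStep.

Section Expectation.
Variables (R : realType) (n m t : nat).
Implicit Types Y Z : Omega n m t -> R.

Lemma ler_Exp Y Z : (forall w, Y w <= Z w) -> Exp Y <= Exp Z.
Proof. by move=> YZ; rewrite ler_wpM2l ?invr_ge0 ?ler0n // ler_sum. Qed.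

Lemma ExpD Y Z : Exp (fun w => Y w + Z w) = Exp Y + Exp Z.
Proof. by rewrite /Exp big_split mulrDr. Qed.

Lemma ExpZ (c : R) Y : Exp (fun w => c * Y w) = c * Exp Y.
Proof. by rewrite /Exp -mulr_sumr mulrCA. Qed.

Lemma Exp_shuffle_breg_le_sigma2 p (G : 'I_n -> 'I_m -> 'rV[R]_p -> 'rV[R]_p)
    (F : 'I_n -> 'I_m -> 'rV[R]_p -> R) a xs (l : 'I_m) :
  Exp (fun w : Omega n m t => shuffle_breg G F a xs (w ord_max) l)
  <= sigma2_shuffle G F a xs t.
Proof.
exact: (le_bigmax _ (fun k : 'I_m => Exp (fun w : Omega n m t => shuffle_breg G F a xs (w ord_max) k))).
Qed.

End Expectation.

Theorem lemma5 (R : realType) (n m p : nat)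
  (F : 'I_n -> 'I_m -> 'rV[R]_p -> R) (G : 'I_n -> 'I_m -> 'rV[R]_p -> 'rV[R]_p)
  (W : 'M[R]_n) (mu L : R) (xs : 'rV[R]_p) (X0 : 'M[R]_(n, p))
  (alpha : nat -> R) (t : nat) :
  (0 < n)%N -> (0 < m)%N -> (0 < p)%N ->
  mixing_matrix W ->
  (forall i l, is_gradient (F i l) (G i l)) ->
  0 < mu -> mu <= L ->
  (forall i l, strongly_convex mu (F i l)) ->
  (forall i l, lipschitz_grad L (G i l)) ->
  (forall x, (n%:R)^-1 * \sum_(i < n) ((m%:R)^-1 * \sum_(l < m) F i l x)
             >= (n%:R)^-1 * \sum_(i < n) ((m%:R)^-1 * \sum_(l < m) F i l xs)) ->
  (forall s, 0 < alpha s) ->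
  alpha t <= (2 * L)^-1 ->
  forall l : 'I_m,
    Exp (fun w : Omega n m t =>
      enorm (xbar (x_tl G W alpha X0 w l.+1)
             - xstar_bar G (alpha t) xs (w ord_max) l.+1) ^+ 2)
    <= (1 - alpha t * mu / 2) *
         Exp (fun w : Omega n m t =>
           enorm (xbar (x_tl G W alpha X0 w l)
                  - xstar_bar G (alpha t) xs (w ord_max) l) ^+ 2)
       + 2 * alpha t * sigma2_shuffle G F (alpha t) xs t
       + 2 * alpha t * L ^+ 2 / n%:R * (mu^-1 + alpha t) *
         Exp (fun w : Omega n m t => fnorm (consensus_err (x_tl G W alpha X0 w l)) ^+ 2).
Proof.
move=> n_gt0 _ _ W_mix FG_grad mu_gt0 mu_le_L F_sconvex G_lip _ alpha_gt0 alpha_le l.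
have two_alpha_ge0 : 0 <= 2 * alpha t by rewrite mulr_ge0 ?ltW.
have sigma_le := ler_wpM2l two_alpha_ge0 (Exp_shuffle_breg_le_sigma2 t G F (alpha t) xs l).
apply: le_trans (lerD (lerD (lexx _) sigma_le) (lexx _)).
rewrite -!ExpZ -!ExpD; apply: ler_Exp => w; rewrite /x_tl inner_iterS.
by apply: avg_error_step_le.
Qed.
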